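(* The family $(f_t)_{t}$, where $t$ runs over all (nonempty) planar rooted trees, is a basis of $\mathrm{Prim}(\mathcal{H})=\{x\in\mathcal{H}:\Delta(x)=x\otimes1+1\otimes x\}$.
   Context: Let $K$ be a field. Planar rooted trees have their children linearly ordered left to right; a planar forest is a finite, possibly empty, sequence $t_1\cdots t_n$ of planar rooted trees ($1$ = empty forest). $\mathcal{H}$ is the free associative unital $K$-algebra on planar rooted trees, with basis the planar forests and product concatenation, graded by weight (number of vertices). $B^+(F)$ is the tree obtained by grafting the trees of $F$ (in order) on a new common root. $\varepsilon(F)=\delta_{F,1}$. $\Delta$ is the unique linear map with $\Delta(1)=1\otimes1$, $\Delta(xy)=(x\otimes1)\Delta(y)+\Delta(x)(1\otimes y)-x\otimes y$, $\Delta(B^+(x))=B^+(x)\otimes 1+(\mathrm{Id}\otimes B^+)\Delta(x)$. $\gamma:\mathcal{H}\to\mathcal{H}$ is linear with $\gamma(t_1\cdots t_n)=\delta_{t_1,\bullet}t_2\cdots t_n$ ($\bullet$ the one-vertex tree) and $\gamma(1)=0$. $\langle-,-\rangle$ is the unique bilinear form on $\mathcal{H}$ with $\langle1,x\rangle=\varepsilon(x)$, $\langle xy,z\rangle=\langle y\otimes x,\Delta(z)\rangle$ (with $\langle a\otimes b,c\otimes d\rangle=\langle a,c\rangle\langle b,d\rangle$) and $\langle B^+(x),y\rangle=\langle x,\gamma(y)\rangle$; it is symmetric, non-degenerate, and forests of different weights are orthogonal. $(f_F)_F$ is the dual basis of the basis of forests: $\langle f_F,G\rangle=\delta_{F,G}$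 for all planar forests $G$. *)

From HB Require Import structures.
From mathcomp Require Import all_boot all_algebra.
From mathcomp Require Import finmap.
From mathcomp Require Import monalg.

Set Implicit Arguments.
Unset Strict Implicit.
Unset Printing Implicit Defensive.

Import GRing.Theory.
Local Open Scope ring_scope.

Inductive ptree : Type := Node of seq ptree.

Fixpoint ptree_enc (t : ptree) : GenTree.tree unit :=
  let: Node ts := t in GenTree.Node 0 (map ptree_enc ts).

Fixpoint ptree_dec (c : GenTree.tree unit) : ptree :=
  match c with
  | GenTree.Leaf _ => Node [::]
  | GenTree.Node _ cs => Node (map ptree_dec cs)
  end.

Fixpoint ptree_codeK (t : ptree) : ptree_dec (ptree_enc t) = t :=
  match t with
  | Node ts => f_equal Node
      ((fix aux (ts : seq ptree) : map ptree_dec (map ptree_enc ts) = ts :=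
          match ts with
          | [::] => erefl
          | t' :: ts' => f_equal2 cons (ptree_codeK t') (aux ts')
          end) ts)
  end.

HB.instance Definition _ := Countable.copy ptree (can_type ptree_codeK).

(* Planar forests: finite sequences of planar rooted trees; [::] is the empty forest 1. *)
Definition forest := seq ptree.

Definition pdot : ptree := Node [::].

Definition Bplus (F : forest) : ptree := Node F.

Section Hopf.
Variable K : fieldType.

(* H : free vector space with basis the planar forests;
   H (x) H : free vector space with basis the pairs of planar forests. *)
Definition H := {malg K[forest]}.
Definition HH := {malg K[(forest * forest)%type]}.

Definition linH (V : lmodType K) (phi : forest -> V) (x : H) : V :=
  \sum_(F <- msupp x) x@_F *: phi F.

Definition linHH (V : lmodType K) (phi : (forest * forest)%type -> V) (x : HH) : V :=
  \sum_(AB <- msupp x) x@_AB *: phi AB.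

Definition tens (x y : H) : HH :=
  \sum_(F <- msupp x) \sum_(G <- msupp y) (x@_F * y@_G) *: << (F, G) >>.

(* The product of H (x) H: (a (x) b)(c (x) d) = ac (x) bd, concatenation of forests. *)
Definition mulHH (u v : HH) : HH :=
  linHH (fun AB => linHH (fun CD => (<< (AB.1 ++ CD.1, AB.2 ++ CD.2) >> : HH)) v) u.

Definition IdBplus (u : HH) : HH :=
  linHH (fun AB => (<< (AB.1, [:: Bplus AB.2]) >> : HH)) u.

(* Coproduct on basis elements, following the recursive rules
   Delta(1) = 1 (x) 1,
   Delta(t y) = (t (x) 1) Delta(y) + Delta(t) (1 (x) y) - t (x) y,
   Delta(B^+(x)) = B^+(x) (x) 1 + (Id (x) B^+) Delta(x). *)
Fixpoint DeltaT (t : ptree) : HH :=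
  let: Node ts := t in
  let fix DF (ts : seq ptree) : HH :=
      match ts with
      | [::] => << ([::], [::]) >>
      | t' :: ts' => mulHH << ([:: t'], [::]) >> (DF ts')
                     + mulHH (DeltaT t') << ([::], ts') >>
                     - << ([:: t'], ts') >>
      end in
  << ([:: t], [::]) >> + IdBplus (DF ts).

Fixpoint DeltaF (F : forest) : HH :=
  match F with
  | [::] => << ([::], [::]) >>
  | t :: F' => mulHH << ([:: t], [::]) >> (DeltaF F')
               + mulHH (DeltaT t) << ([::], F') >>
               - << ([:: t], F') >>
  end.

Definition Delta (x : H) : HH := linH DeltaF x.

Definition Prim : pred H := fun x => Delta x == tens x << [::] >> + tens << [::] >> x.

Definition epsF (F : forest) : K := (F == [::])%:R.

(* The pairing on basis elements, following the recursive characterisation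
   <1, z> = eps(z), <x y, z> = <y (x) x, Delta z>, <B^+(x), y> = <x, gamma(y)>,
   with gamma(t1...tn) = delta_{t1,o} t2...tn, gamma(1) = 0. *)
Fixpoint pairT (t : ptree) (G : forest) {struct t} : K :=
  let: Node ts := t in
  let fix PF (ts : seq ptree) (G : forest) : K :=
      match ts with
      | [::] => epsF G
      | t' :: ts' =>
          if ts' is [::] then pairT t' G
          else \sum_(AB <- msupp (DeltaF G))
                 (DeltaF G)@_AB * (PF ts' AB.1 * pairT t' AB.2)
      end in
  match G with
  | Node [::] :: G' => PF ts G'
  | _ => 0
  end.

Fixpoint pairF (F : forest) (G : forest) : K :=
  match F with
  | [::] => epsF G
  | t :: F' =>
      if F' is [::] then pairT t G
      else \sum_(AB <- msupp (DeltaF G))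
             (DeltaF G)@_AB * (pairF F' AB.1 * pairT t AB.2)
  end.

Definition pair (x y : H) : K :=
  \sum_(F <- msupp x) \sum_(G <- msupp y) x@_F * y@_G * pairF F G.

End Hopf.

(* The pairing is a Hopf pairing that respects weight: besides
   <x y, z> = <y (x) x, Delta z>, which defines it, one has <z, x y> = <Delta z, y (x) x>,
   and it is symmetric. Elements of H and of H (x) H are determined by their pairings with
   forests, because the f_F form a dual basis. Now <Delta f_t, F (x) G> = <f_t, G F> vanishes
   unless one of F, G is empty, exactly as for f_t (x) 1 + 1 (x) f_t: f_t is primitive.
   Conversely a primitive x is orthogonal to 1 and to every forest t F with F nonempty, since
   <t F, x> = <F (x) t, Delta x>; hence x = sum_t <t, x> f_t, a finite sum because <t, x> = 0
   unless t has the weight of some forest in the support of x. *)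

From HB Require Import structures.
From mathcomp Require Import all_boot all_algebra.
From mathcomp Require Import finmap.
From mathcomp Require Import monalg.
From mathcomp Require Import ring zify.

Set Implicit Arguments.
Unset Strict Implicit.
Unset Printing Implicit Defensive.

Import GRing.Theory.
Local Open Scope ring_scope.

Definition mdot (K : comNzRingType) (T : choiceType) (g : {malg K[T]}) (phi : T -> K) : K :=
  mmap idfun phi g.

Section MalgDot.
Variables (K : comNzRingType) (T : choiceType).
Implicit Types (g : {malg K[T]}) (phi psi : T -> K).

Lemma mdotE g phi : mdot g phi = \sum_(k <- msupp g) g@_k * phi k.
Proof. by []. Qed.

Lemma mdot0 phi : mdot 0 phi = 0.
Proof. exact: mmap0. Qed.

Lemma mdotD g1 g2 phi : mdot (g1 + g2) phi = mdot g1 phi + mdot g2 phi.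
Proof. exact: mmapD. Qed.

Lemma mdotB g1 g2 phi : mdot (g1 - g2) phi = mdot g1 phi - mdot g2 phi.
Proof. exact: mmapB. Qed.

Lemma mdot_sum (I : Type) (r : seq I) (Q : pred I) (G : I -> {malg K[T]}) phi :
  mdot (\sum_(i <- r | Q i) G i) phi = \sum_(i <- r | Q i) mdot (G i) phi.
Proof. exact: (raddf_sum (mmap idfun phi)). Qed.

Lemma mdotZ c g phi : mdot (c *: g) phi = c * mdot g phi.
Proof.
rewrite /mdot (mmapEw (msuppZ_le _ _)) mulr_sumr.
by apply: eq_bigr => k _; rewrite mcoeffZ mulrA.
Qed.

Lemma mdotU1 k phi : mdot << k >> phi = phi k.
Proof. by rewrite /mdot mmapU mul1r. Qed.

Lemma eq_mdot g phi psi : phi =1 psi -> mdot g phi = mdot g psi.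
Proof. by move=> e; apply: eq_bigr => k _; rewrite e. Qed.

Lemma mdotf0 g : mdot g (fun=> 0) = 0.
Proof. by rewrite mdotE big1 // => k _; rewrite mulr0. Qed.

Lemma mdotfD g phi psi : mdot g (fun k => phi k + psi k) = mdot g phi + mdot g psi.
Proof. by rewrite !mdotE -big_split; apply: eq_bigr => k _; rewrite mulrDr. Qed.

Lemma mdotfMl c g phi : mdot g (fun k => c * phi k) = c * mdot g phi.
Proof. by rewrite !mdotE mulr_sumr; apply: eq_bigr => k _; rewrite mulrCA. Qed.

Lemma mdotfMr c g phi : mdot g (fun k => phi k * c) = mdot g phi * c.
Proof. by rewrite !mdotE mulr_suml; apply: eq_bigr => k _; rewrite mulrA. Qed.

Lemma mdot_delta g a : mdot g (fun k => (a == k)%:R) = g@_a.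
Proof.
rewrite [in RHS](monalgE g) raddf_sum mdotE; apply: eq_bigr => k _.
by rewrite /= mcoeffU mulr_natr eq_sym.
Qed.

Lemma mdot_neq0 g phi : mdot g phi != 0 -> exists2 k, k \in msupp g & phi k != 0.
Proof.
move=> nz; apply/hasP; apply: contraNT nz => /hasPn zero.
rewrite mdotE big_seq big1 // => k /zero; rewrite negbK => /eqP ->.
by rewrite mulr0.
Qed.

End MalgDot.

Lemma exchange_mdot (K : comNzRingType) (T1 T2 : choiceType)
    (g : {malg K[T1]}) (h : {malg K[T2]}) (phi : T1 -> T2 -> K) :
  mdot g (fun a => mdot h (phi a)) = mdot h (fun b => mdot g (phi^~ b)).
Proof.
rewrite mdotE; under eq_bigr do rewrite mdotE mulr_sumr.
rewrite exchange_big /=; apply: eq_bigr => b _; rewrite mdotE mulr_sumr.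
by apply: eq_bigr => a _; rewrite mulrCA.
Qed.

Lemma mdot_lin (K : comNzRingType) (T1 T2 : choiceType) (u : {malg K[T1]})
    (psi : T1 -> {malg K[T2]}) phi :
  mdot (\sum_(k <- msupp u) u@_k *: psi k) phi = mdot u (fun k => mdot (psi k) phi).
Proof. by rewrite mdot_sum mdotE; apply: eq_bigr => k _; rewrite mdotZ. Qed.

Section NestedForestInd.
Variable Q : forest -> Prop.
Hypothesis Q_nil : Q [::].
Hypothesis Q_cons : forall ts F, Q ts -> Q F -> Q (Node ts :: F).

Fixpoint nested_tree_ind (t : ptree) : forall F, Q F -> Q (t :: F) :=
  let: Node ts := t in fun F QF =>
    Q_cons ((fix forest_rec (ts : forest) : Q ts :=
               if ts is t' :: ts' then nested_tree_ind t' (forest_rec ts') else Q_nil) ts) QF.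

Fixpoint nested_forest_ind (F : forest) : Q F :=
  if F is t :: F' then nested_tree_ind t (nested_forest_ind F') else Q_nil.

End NestedForestInd.

Fixpoint tweight (t : ptree) : nat := let: Node ts := t in (sumn (map tweight ts)).+1.
Definition fweight (F : forest) : nat := sumn (map tweight F).

Lemma tweight_node ts : tweight (Node ts) = (fweight ts).+1.
Proof. by []. Qed.

Lemma fweight_cons t F : fweight (t :: F) = (tweight t + fweight F)%N.
Proof. by []. Qed.

Lemma tweight_gt0 t : (0 < tweight t)%N.
Proof. by case: t. Qed.

Lemma size_le_fweight F : (size F <= fweight F)%N.
Proof. by elim: F => //= t F IH; have := tweight_gt0 t; rewrite fweight_cons; lia. Qed.

Lemma tweight_le_fweight F t : t \in F -> (tweight t <= fweight F)%N.
Proof.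
elim: F => //= u F IH; rewrite in_cons fweight_cons => /orP[/eqP ->|/IH]; lia.
Qed.

Fixpoint seqs_upto (T : Type) (L : seq T) (k : nat) : seq (seq T) :=
  if k is k'.+1 then [::] :: [seq x :: s | x <- L, s <- seqs_upto L k'] else [:: [::]].

Lemma mem_seqs_upto (T : eqType) (L : seq T) k (s : seq T) :
  all (mem L) s -> (size s <= k)%N -> s \in seqs_upto L k.
Proof.
elim: k s => [|k IH] [|x s] //= /andP[xL sL] hs.
by rewrite in_cons; apply/orP; right; apply/allpairsP; exists (x, s); split => //; apply: IH.
Qed.

Fixpoint trees_upto (n : nat) : seq ptree :=
  if n is n'.+1 then [seq Node ts | ts <- seqs_upto (trees_upto n') n'] else [::].

Lemma mem_trees_upto n t : (tweight t <= n)%N -> t \in trees_upto n.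
Proof.
elim: n t => [|n IH] [ts] //; rewrite tweight_node ltnS => hS /=.
apply/mapP; exists ts => //; apply: mem_seqs_upto; last exact: leq_trans (size_le_fweight ts) hS.
by apply/allP => u uS; apply: IH; apply: leq_trans (tweight_le_fweight uS) _; lia.
Qed.

(* Reducing the coproduct, or the monalg singletons << k >> it is built from, is
   prohibitively expensive: simplification must never do it, and rewrite rules about it
   are instantiated explicitly or hidden behind [sweedler]. *)
Arguments mulHH : simpl never.
Arguments IdBplus : simpl never.
Arguments DeltaT : simpl never.
Arguments DeltaF : simpl never.
Arguments pairF : simpl never.

Section Coproduct.
Variable K : fieldType.

Lemma epsF_nil : epsF K [::] = 1. Proof. by rewrite /epsF eqxx. Qed.
Lemma epsF_cons t F : epsF K (t :: F) = 0. Proof. by []. Qed.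

Lemma mdot_mulHH (u v : HH K) phi :
  mdot (mulHH u v) phi = mdot u (fun AB => mdot v (fun CD => phi (AB.1 ++ CD.1, AB.2 ++ CD.2))).
Proof.
rewrite mdot_lin; apply: eq_mdot => AB.
by rewrite mdot_lin; apply: eq_mdot => CD; rewrite mdotU1.
Qed.

Lemma mdot_IdBplus (u : HH K) phi :
  mdot (IdBplus u) phi = mdot u (fun AB => phi (AB.1, [:: Bplus AB.2])).
Proof. by rewrite mdot_lin; apply: eq_mdot => AB; rewrite mdotU1. Qed.

Lemma DeltaF_cons t F : DeltaF K (t :: F) =
  mulHH << ([:: t], [::]) >> (DeltaF K F) + mulHH (DeltaT K t) << ([::], F) >> - << ([:: t], F) >>.
Proof. by []. Qed.

Lemma DeltaT_node ts : DeltaT K (Node ts) = << ([:: Node ts], [::]) >> + IdBplus (DeltaF K ts).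
Proof. by []. Qed.

Lemma mdot_DeltaF_cons t F phi : mdot (DeltaF K (t :: F)) phi =
  mdot (DeltaF K F) (fun CD => phi (t :: CD.1, CD.2))
  + mdot (DeltaT K t) (fun AB => phi (AB.1, AB.2 ++ F)) - phi ([:: t], F).
Proof.
rewrite DeltaF_cons mdotB (mdotD (mulHH _ _)); congr (_ + _ - _).
- by rewrite mdot_mulHH mdotU1.
- by rewrite mdot_mulHH; apply: eq_mdot => AB; rewrite mdotU1 cats0.
- exact: mdotU1.
Qed.

Fact sweedler_key : unit. Proof. by []. Qed.
Definition sweedler G (phi : forest * forest -> K) : K :=
  locked_with sweedler_key (mdot (DeltaF K G) phi).

Lemma sweedlerE G phi : sweedler G phi = mdot (DeltaF K G) phi.
Proof. by rewrite /sweedler locked_withE. Qed.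

Lemma eq_sweedler G phi psi : phi =1 psi -> sweedler G phi = sweedler G psi.
Proof. by rewrite !sweedlerE; apply: eq_mdot. Qed.

Lemma sweedlerf0 G : sweedler G (fun=> 0) = 0.
Proof. by rewrite sweedlerE mdotf0. Qed.

Lemma sweedlerfD G phi psi :
  sweedler G (fun k => phi k + psi k) = sweedler G phi + sweedler G psi.
Proof. by rewrite !sweedlerE mdotfD. Qed.

Lemma sweedlerfMl c G phi : sweedler G (fun k => c * phi k) = c * sweedler G phi.
Proof. by rewrite !sweedlerE mdotfMl. Qed.

Lemma sweedlerfMr c G phi : sweedler G (fun k => phi k * c) = sweedler G phi * c.
Proof. by rewrite !sweedlerE mdotfMr. Qed.

Lemma exchange_sweedler G G' (phi : forest * forest -> forest * forest -> K) :
  sweedler G (fun a => sweedler G' (phi a)) = sweedler G' (fun b => sweedler G (phi^~ b)).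
Proof.
rewrite sweedlerE (eq_mdot _ (psi := fun a => mdot (DeltaF K G') (phi a))).
  by rewrite exchange_mdot sweedlerE; apply: eq_mdot => b; rewrite sweedlerE.
by move=> a; rewrite sweedlerE.
Qed.

Lemma sweedler_nil phi : sweedler [::] phi = phi ([::], [::]).
Proof. by rewrite sweedlerE mdotU1. Qed.

Lemma sweedler_tree t phi : sweedler [:: t] phi = mdot (DeltaT K t) phi.
Proof.
rewrite sweedlerE mdot_DeltaF_cons -sweedlerE sweedler_nil addrAC subrr add0r.
by apply: eq_mdot => -[A B]; rewrite /= cats0.
Qed.

Lemma sweedler_cons t F phi : sweedler (t :: F) phi =
  sweedler F (fun CD => phi (t :: CD.1, CD.2)) + sweedler [:: t] (fun AB => phi (AB.1, AB.2 ++ F))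
  - phi ([:: t], F).
Proof. by rewrite sweedlerE mdot_DeltaF_cons -!sweedlerE sweedler_tree. Qed.

Lemma sweedler_node ts phi : sweedler [:: Node ts] phi =
  phi ([:: Node ts], [::]) + sweedler ts (fun AB => phi (AB.1, [:: Node AB.2])).
Proof. by rewrite sweedler_tree DeltaT_node mdotD mdotU1 mdot_IdBplus sweedlerE. Qed.

Lemma sweedler_cat G F phi : sweedler (G ++ F) phi =
  sweedler F (fun AB => phi (G ++ AB.1, AB.2)) + sweedler G (fun AB => phi (AB.1, AB.2 ++ F))
  - phi (G, F).
Proof.
elim: G phi => [|t G IH] phi.
  by rewrite sweedler_nil addrK; apply: eq_sweedler => -[A B].
rewrite cat_cons sweedler_cons (IH (fun CD => phi (t :: CD.1, CD.2))) (sweedler_cons t G).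
under [sweedler [:: t] _]eq_sweedler do rewrite catA.
rewrite /=; ring.
Qed.

Lemma sweedler_counitl G psi : sweedler G (fun AB => epsF K AB.1 * psi AB.2) = psi G.
Proof.
elim/nested_forest_ind: G psi => [|ts F IHts IHF] psi; first by rewrite sweedler_nil epsF_nil mul1r.
rewrite sweedler_cons sweedler_node epsF_cons mul0r add0r subr0.
rewrite (eq_sweedler _ (psi := fun=> 0)) ?sweedlerf0 ?add0r; last first.
  by move=> CD; rewrite epsF_cons mul0r.
exact: (IHts (fun B => psi (Node B :: F))).
Qed.

Lemma sweedler_counitr G phi : sweedler G (fun AB => phi AB.1 * epsF K AB.2) = phi G.
Proof.
elim/nested_forest_ind: G phi => [|ts F IHts IHF] phi; first by rewrite sweedler_nil epsF_nil mulr1.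
rewrite sweedler_cons (IHF (fun A => phi (Node ts :: A))) sweedler_node /=.
rewrite (eq_sweedler _ (psi := fun=> 0)) ?sweedlerf0 ?addr0 ?addrK //.
by move=> CD; rewrite epsF_cons mulr0.
Qed.

Lemma sweedler_weight G phi :
    (forall A B, (fweight A + fweight B)%N = fweight G -> phi (A, B) = 0) ->
  sweedler G phi = 0.
Proof.
elim/nested_forest_ind: G phi => [|ts F IHts IHF] phi phi0; first by rewrite sweedler_nil phi0.
rewrite sweedler_cons sweedler_node IHF => [|A B hAB]; last first.
  by apply: phi0; rewrite /= !fweight_cons; lia.
rewrite IHts => [|A B hAB]; last by apply: phi0; rewrite /= !fweight_cons !tweight_node; lia.
by rewrite add0r addr0 subrr.
Qed.
End Coproduct.

Section Pairing.
Variable K : fieldType.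

Lemma epsF_cat F G : epsF K (F ++ G) = epsF K F * epsF K G.
Proof. by case: F => [|? ?]; rewrite ?epsF_nil ?epsF_cons ?mul1r ?mul0r. Qed.

Lemma pairF_nil G : pairF K [::] G = epsF K G.
Proof. by []. Qed.

Lemma pairF_node_nil ts : pairF K [:: Node ts] [::] = 0.
Proof. by []. Qed.

Lemma pairF_node_cons ts C G :
  pairF K [:: Node ts] (Node C :: G) = epsF K C * pairF K ts G.
Proof. by case: C => [|? ?]; rewrite ?epsF_nil ?epsF_cons ?mul1r ?mul0r //; case: ts. Qed.

Lemma pairF_cons t F G :
  pairF K (t :: F) G = sweedler G (fun AB => pairF K F AB.1 * pairF K [:: t] AB.2).
Proof.
case: F => [|t' F]; last by rewrite sweedlerE.
by rewrite (eq_sweedler _ (psi := fun AB => epsF K AB.1 * pairF K [:: t] AB.2)) ?sweedler_counitl.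
Qed.

Lemma pairF_nilr F : pairF K F [::] = epsF K F.
Proof.
case: F => [|[ts] F]; first by rewrite pairF_nil.
by rewrite pairF_cons sweedler_nil pairF_node_nil epsF_cons mulr0.
Qed.

Lemma pairF_cons_node C F ts :
  pairF K (Node C :: F) [:: Node ts] = epsF K C * pairF K F ts.
Proof.
rewrite pairF_cons sweedler_node pairF_nilr epsF_cons mulr0 add0r.
rewrite (eq_sweedler _ (psi := fun AB => epsF K C * (pairF K F AB.1 * epsF K AB.2))) => [|AB].
  by rewrite sweedlerfMl sweedler_counitr.
by rewrite /= pairF_node_cons pairF_nilr [epsF K C * _]mulrC mulrA.
Qed.

Lemma pairF_node_catr ts B F :
    (forall G F, pairF K ts (G ++ F) = sweedler ts (fun AB => pairF K AB.1 F * pairF K AB.2 G)) ->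
  pairF K [:: Node ts] (B ++ F) =
    epsF K B * pairF K [:: Node ts] F
    + sweedler ts (fun AB => pairF K AB.1 F * pairF K [:: Node AB.2] B).
Proof.
move=> IHts; case: B => [|[C] B] /=.
  rewrite epsF_nil mul1r (eq_sweedler _ (psi := fun=> 0)) ?sweedlerf0 ?addr0 // => AB.
  by rewrite pairF_node_nil mulr0.
rewrite epsF_cons mul0r add0r pairF_node_cons IHts -sweedlerfMl.
by apply: eq_sweedler => AB; rewrite pairF_node_cons mulrCA.
Qed.

Lemma pairF_catr z G F :
  pairF K z (G ++ F) = sweedler z (fun AB => pairF K AB.1 F * pairF K AB.2 G).
Proof.
elim/nested_forest_ind: z G F => [|ts z IHts IHz] G F.
  by rewrite sweedler_nil !pairF_nil epsF_cat mulrC.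
set t := Node ts; set X := sweedler G (fun CD =>
  pairF K z CD.1 * sweedler ts (fun AB => pairF K AB.1 F * pairF K [:: Node AB.2] CD.2)).
have M1 : sweedler z (fun CD => pairF K (t :: CD.1) F * pairF K CD.2 G) =
          sweedler F (fun AB => pairF K z (G ++ AB.1) * pairF K [:: t] AB.2).
  under [RHS]eq_sweedler do rewrite IHz -sweedlerfMr.
  rewrite exchange_sweedler; apply: eq_sweedler => CD.
  by rewrite pairF_cons -sweedlerfMr; apply: eq_sweedler => AB; rewrite mulrAC.
have M2 : sweedler [:: t] (fun AB => pairF K AB.1 F * pairF K (AB.2 ++ z) G) =
          pairF K [:: t] F * pairF K z G + X.
  rewrite sweedler_node; congr (_ + _).
  under eq_sweedler do rewrite /= pairF_cons -sweedlerfMl.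
  rewrite exchange_sweedler; apply: eq_sweedler => CD.
  by rewrite -sweedlerfMl; apply: eq_sweedler => AB; rewrite mulrCA.
have M3 : sweedler G (fun CD => pairF K z CD.1 * pairF K [:: t] (CD.2 ++ F)) =
          pairF K z G * pairF K [:: t] F + X.
  under eq_sweedler do rewrite (pairF_node_catr _ _ IHts) mulrDr mulrA.
  by rewrite sweedlerfD sweedlerfMr sweedler_counitr.
rewrite pairF_cons sweedler_cat sweedler_cons M1 M2 M3 /=; ring.
Qed.

Lemma pairF_sym F G : pairF K F G = pairF K G F.
Proof.
elim/nested_forest_ind: F G => [|ts F IHts IHF] G; first by rewrite pairF_nil pairF_nilr.
have sym_t B : pairF K [:: Node ts] B = pairF K B [:: Node ts].
  case: B => [|[C] B]; first by rewrite pairF_node_nil pairF_nil epsF_cons.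
  by rewrite pairF_node_cons pairF_cons_node IHts.
rewrite pairF_cons (pairF_catr G [:: Node ts] F); apply: eq_sweedler => AB.
by rewrite IHF sym_t.
Qed.

Lemma pairF_weight F G : fweight F != fweight G -> pairF K F G = 0.
Proof.
elim/nested_forest_ind: F G => [|ts F IHts IHF] G hw.
  by rewrite pairF_nil; case: G hw.
have weight_t B : tweight (Node ts) != fweight B -> pairF K [:: Node ts] B = 0.
  case: B => [|[[|c C]] B] hB; first exact: pairF_node_nil.
    rewrite pairF_node_cons IHts ?mulr0 //; move: hB; rewrite fweight_cons !tweight_node; lia.
  by rewrite pairF_node_cons epsF_cons mul0r.
rewrite pairF_cons; apply: sweedler_weight => A B hAB /=.
have [e|ne] := eqVneq (fweight F) (fweight A); last by rewrite IHF // mul0r.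
by rewrite weight_t ?mulr0 //; move: hw; rewrite fweight_cons -hAB e; lia.
Qed.
End Pairing.

Lemma sum_mul_seq1_eq (T : eqType) (R : comNzRingType) (s : seq T) (c : T -> R) a :
  uniq s -> \sum_(t <- s) c t * ([:: t] == [:: a])%:R = (a \in s)%:R * c a.
Proof.
move=> s_uniq; under eq_bigr do rewrite eqseq_cons eqxx andbT.
case: (boolP (a \in s)) => [a_s|a_s]; last first.
  rewrite mul0r big_seq big1 // => t t_s.
  by rewrite (_ : t == a = false) ?mulr0 //; apply: contraNF a_s => /eqP <-.
rewrite (bigD1_seq a) //= eqxx mulr1 mul1r big1 ?addr0 // => t /negbTE ->.
by rewrite mulr0.
Qed.

Section DualBasis.
Variable K : fieldType.

Lemma pairE (x y : H K) : pair x y = mdot x (fun F => mdot y (pairF K F)).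
Proof.
rewrite /pair mdotE; apply: eq_bigr => F _; rewrite mdotE mulr_sumr.
by apply: eq_bigr => G _; rewrite mulrA.
Qed.

Lemma pair_basisr (x : H K) G : pair x << G >> = mdot x (pairF K ^~ G).
Proof. by rewrite pairE; apply: eq_mdot => F; rewrite mdotU1. Qed.

Lemma mdot_Delta (x : H K) phi : mdot (Delta x) phi = mdot x (fun G => sweedler G phi).
Proof. by rewrite mdot_lin; apply: eq_mdot => G; rewrite sweedlerE. Qed.

Lemma mdot_tens (x y : H K) phi :
  mdot (tens x y) phi = mdot x (fun F => mdot y (fun G => phi (F, G))).
Proof.
rewrite mdot_sum mdotE; apply: eq_bigr => F _; rewrite mdot_sum mdotE mulr_sumr.
by apply: eq_bigr => G _; rewrite mdotZ mdotU1 mulrA.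
Qed.

Lemma prim_sweedler (x : H K) phi : x \in @Prim K ->
  mdot x (fun G => sweedler G phi) =
    mdot x (fun F => phi (F, [::])) + mdot x (fun G => phi ([::], G)).
Proof.
rewrite unfold_in => /eqP x_prim.
rewrite -mdot_Delta x_prim mdotD !mdot_tens mdotU1.
by congr (_ + _); apply: eq_mdot => F; rewrite mdotU1.
Qed.

Lemma prim_pairF_nil (x : H K) : x \in @Prim K -> mdot x (pairF K [::]) = 0.
Proof.
move=> x_prim; have := prim_sweedler (fun AB => epsF K AB.1 * epsF K AB.2) x_prim.
under eq_mdot do rewrite sweedler_counitl.
under [X in _ = X + _]eq_mdot do rewrite epsF_nil mulr1.
under [X in _ = _ + X]eq_mdot do rewrite epsF_nil mul1r.
by rewrite -[X in X = _]addr0 => /addrI/esym.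
Qed.

Lemma prim_pairF_cons (x : H K) t F :
  x \in @Prim K -> F != [::] -> mdot x (pairF K (t :: F)) = 0.
Proof.
move=> x_prim nF; under eq_mdot do rewrite pairF_cons.
rewrite prim_sweedler //= (eq_mdot _ (psi := fun=> 0)) => [|G]; last first.
  by rewrite pairF_nilr epsF_cons mulr0.
rewrite (eq_mdot _ (psi := fun=> 0)) ?mdotf0 ?addr0 // => G.
by rewrite pairF_nilr; case: F nF => // ? ?; rewrite epsF_cons mul0r.
Qed.

Variable f : forest -> H K.
Hypothesis f_dual : forall F G, pair (f F) << G >> = (F == G)%:R.

Lemma mdot_dual A C : mdot (f A) (pairF K C) = (A == C)%:R.
Proof.
by rewrite (eq_mdot _ (psi := pairF K ^~ C)) -?pair_basisr ?f_dual // => F; rewrite pairF_sym.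
Qed.

Lemma mcoeff_dual (x : H K) A : x@_A = mdot (f A) (fun F => mdot x (pairF K F)).
Proof.
rewrite -mdot_delta (eq_mdot _ (psi := fun G => mdot (f A) (pairF K ^~ G))) => [|G].
  exact: exchange_mdot.
by rewrite -pair_basisr f_dual.
Qed.

Lemma mcoeff2_dual (w : HH K) A B : w@_(A, B) =
  mdot (f A) (fun F => mdot (f B) (fun G => mdot w (fun CD => pairF K CD.1 F * pairF K CD.2 G))).
Proof.
rewrite -mdot_delta.
rewrite (eq_mdot _ (psi := fun CD => mdot (f A) (fun F => mdot (f B) (fun G =>
  pairF K CD.1 F * pairF K CD.2 G)))) => [|[C D]].
  rewrite exchange_mdot; apply: eq_mdot => F; exact: exchange_mdot.
under eq_mdot do rewrite mdotfMl.
by rewrite mdotfMr !mdot_dual xpair_eqE; case: (A == C); case: (B == D); rewrite ?(mulr1, mulr0).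
Qed.

Lemma eq_dual (x y : H K) : (forall F, mdot x (pairF K F) = mdot y (pairF K F)) -> x = y.
Proof. by move=> xy; apply/malgP => A; rewrite !mcoeff_dual; apply: eq_mdot. Qed.

Lemma eq_dual2 (w1 w2 : HH K) :
    (forall F G, mdot w1 (fun CD => pairF K CD.1 F * pairF K CD.2 G) =
                 mdot w2 (fun CD => pairF K CD.1 F * pairF K CD.2 G)) ->
  w1 = w2.
Proof.
move=> w12; apply/malgP => -[A B]; rewrite !mcoeff2_dual.
by apply: eq_mdot => F; apply: eq_mdot => G; apply: w12.
Qed.

Lemma dual_tree_prim t : f [:: t] \in @Prim K.
Proof.
rewrite unfold_in; apply/eqP/eq_dual2 => F G.
rewrite mdot_Delta mdotD !mdot_tens mdotU1.
under eq_mdot do rewrite -pairF_catr.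
under [X in _ = X + _]eq_mdot do rewrite mdotU1.
rewrite -pair_basisr f_dual mdotfMr mdotfMl -!pair_basisr !f_dual.
case: G => [|g G]; first by rewrite epsF_nil mulr1 mulr0 addr0.
rewrite epsF_cons mulr0 add0r; case: F => [|h F]; first by rewrite epsF_nil mul1r cats0.
by rewrite epsF_cons mul0r eqseq_cons; case: G => [|? ?]; rewrite andbF.
Qed.

Lemma mdot_dual_trees (s : seq ptree) (c : ptree -> K) F :
  mdot (\sum_(t <- s) c t *: f [:: t]) (pairF K F) = \sum_(t <- s) c t * ([:: t] == F)%:R.
Proof. by rewrite mdot_sum; apply: eq_bigr => t _; rewrite mdotZ mdot_dual. Qed.

Lemma dual_trees_free (s : seq ptree) (c : ptree -> K) :
  uniq s -> \sum_(t <- s) c t *: f [:: t] = 0 -> forall t, t \in s -> c t = 0.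
Proof.
move=> s_uniq c0 t t_s; have := sum_mul_seq1_eq c t s_uniq; rewrite t_s mul1r => <-.
by rewrite -mdot_dual_trees c0 mdot0.
Qed.

Lemma prim_span_dual_trees (x : H K) : x \in @Prim K ->
  exists (s : seq ptree) (c : ptree -> K), x = \sum_(t <- s) c t *: f [:: t].
Proof.
move=> x_prim; pose c t := mdot x (pairF K [:: t]).
pose s := undup (trees_upto (\max_(G <- msupp x) fweight G)).
have c_out t : t \notin s -> c t = 0.
  rewrite mem_undup; apply: contraNeq => /mdot_neq0[G G_x tG].
  apply: mem_trees_upto; have -> : tweight t = fweight G.
    by rewrite -[tweight t]addn0; apply/eqP; apply: contraNT tG => /(@pairF_weight K [:: t]) ->.
  exact: (leq_bigmax_seq _ G_x).
exists s, c; apply: eq_dual => F; rewrite mdot_dual_trees.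
case: F => [|t [|t' F]].
- by rewrite prim_pairF_nil //; apply/esym/big1 => u _; rewrite mulr0.
- rewrite sum_mul_seq1_eq ?undup_uniq //.
  case: (boolP (t \in s)) => [_|/c_out ct0]; first by rewrite mul1r.
  by rewrite mul0r; exact: ct0.
- by rewrite prim_pairF_cons //; apply/esym/big1 => u _; rewrite eqseq_cons andbF mulr0.
Qed.

End DualBasis.

Theorem proposition22 (K : fieldType) (f : forest -> H K) :
  (forall F G : forest, pair (f F) << G >> = (F == G)%:R) ->
  [/\ forall t : ptree, f [:: t] \in @Prim K,
      forall (s : seq ptree) (c : ptree -> K), uniq s ->
        \sum_(t <- s) c t *: f [:: t] = 0 -> forall t, t \in s -> c t = 0
    & forall x : H K, x \in @Prim K ->
        exists (s : seq ptree) (c : ptree -> K), x = \sum_(t <- s) c t *: f [:: t]].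
Proof.
move=> f_dual; split.
- exact: dual_tree_prim.
- exact: dual_trees_free.
- exact: prim_span_dual_trees.
Qed.
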